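(* The group $G_3$ has exponential word growth (with respect to the generating set $\{a,b,c\}$).
   Context: Let $X=\{1,2,3\}$ and $T$ the ternary rooted tree with vertex set $X^*$. $\mathrm{Aut}(T)$ is the group of root-preserving automorphisms with product left-to-right: $(gh)(u)=h(g(u))$. Sections $g|_u$ are defined by $g(uv)=g(u)\,g|_u(v)$; we write $g=(g|_1,g|_2,g|_3)\lambda_g$ with $\lambda_g\in S_3$ the action on the first level; $e$ is the identity. $G_3=\langle a,b,c\rangle\le\mathrm{Aut}(T)$ with $a=(a,b,e)(1\,2)$, $b=(e,b,c)(2\,3)$, $c=(a,e,c)(3\,1)$. *)

From Stdlib Require Import List Reals.
Import ListNotations.

Inductive X : Type := x1 | x2 | x3.

Definition X_eqb (x y : X) : bool :=
  match x, y with
  | x1, x1 | x2, x2 | x3, x3 => true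
  | _, _ => false
  end.

(** Vertices of the ternary rooted tree T: finite words over X. *)
Definition vertex := list X.

(** States of the automaton defining a, b, c (and the identity e). *)
Inductive st : Type := Sa | Sb | Sc | Se.

(** lambda_g : action on the first level. *)
Definition perm (s : st) (x : X) : X :=
  match s, x with
  | Sa, x1 => x2 | Sa, x2 => x1
  | Sb, x2 => x3 | Sb, x3 => x2
  | Sc, x3 => x1 | Sc, x1 => x3
  | _, x => x
  end.

Definition sect (s : st) (x : X) : st :=
  match s, x with
  | Sa, x1 => Sa | Sa, x2 => Sb | Sa, x3 => Se
  | Sb, x1 => Se | Sb, x2 => Sb | Sb, x3 => Sc
  | Sc, x1 => Sa | Sc, x2 => Se | Sc, x3 => Sc
  | Se, _ => Se
  end.

Fixpoint act (s : st) (u : vertex) : vertex :=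
  match u with
  | [] => []
  | x :: w => perm s x :: act (sect s x) w
  end.

Definition perm_inv (s : st) (y : X) : X :=
  if X_eqb (perm s x1) y then x1
  else if X_eqb (perm s x2) y then x2 else x3.

Fixpoint act_inv (s : st) (u : vertex) : vertex :=
  match u with
  | [] => []
  | y :: w => let x := perm_inv s y in x :: act_inv (sect s x) w
  end.

(** Letters of the symmetric generating set {a,b,c}^{+-1}: (s, true) is s^{-1}. *)
Definition letter := (st * bool)%type.

Definition is_gen (l : letter) : Prop := fst l <> Se.

Definition act_letter (l : letter) : vertex -> vertex :=
  if snd l then act_inv (fst l) else act (fst l).

(** Evaluation of a word g1 g2 ... gk as an element of Aut(T),
    with (gh)(u) = h(g(u)), i.e. g1 acts first. *)
Fixpoint eval (w : list letter) (u : vertex) : vertex :=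
  match w with
  | [] => u
  | l :: w' => eval w' (act_letter l u)
  end.

Definition same_elt (w1 w2 : list letter) : Prop :=
  forall u : vertex, eval w1 u = eval w2 u.

Definition in_ball_word (n : nat) (w : list letter) : Prop :=
  (length w <= n)%nat /\ Forall is_gen w.

Definition ball_card_ge (n m : nat) : Prop :=
  exists ws : list (list letter),
    length ws = m /\ Forall (in_ball_word n) ws /\
    ForallOrdPairs (fun w1 w2 => ~ same_elt w1 w2) ws.

Definition exponential_growth : Prop :=
  exists r : R, (1 < r)%R /\
    forall n : nat, exists m : nat, ball_card_ge n m /\ (r ^ n <= INR m)%R.

(* Positive words in a, b, c represent pairwise distinct elements of G_3,
   so the ball of radius n has at least 3^n elements.  The key feature of G_3
   is that a generator moving a point p of the first level has, as section at
   p, the generator indexed by p, whichever generator it was.  So if g u' and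
   h v' (g <> h) represent the same element, their sections at the point x
   moved by both g and h start with the same letter; cancelling it leaves two
   strictly shorter positive words representing the same element, which by
   induction are equal, and this contradicts g x <> h x.  That a nonempty
   positive word is nontrivial follows similarly: its section w at a moved
   point has no two consecutive equal letters, and a minimal counterexample
   would force the two points moved by the first letter of w to be moved by
   every letter of w, which such a word of length at least 2 cannot do. *)

From Stdlib Require Import List Reals.
From Stdlib Require Import Lia Lra Arith.
Import ListNotations.

Inductive gen := GA | GB | GC.

Definition gen_eq_dec (g h : gen) : {g = h} + {g <> h}.
Proof. decide equality. Defined.

Definition gen_st (g : gen) : st := match g with GA => Sa | GB => Sb | GC => Sc end.

Definition gperm (g : gen) : X -> X := perm (gen_st g).

Definition moves (g : gen) (x : X) : bool :=
  match g, x with GA, x3 | GB, x1 | GC, x2 => false | _, _ => true end.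

Definition pt_gen (x : X) : gen := match x with x1 => GA | x2 => GB | x3 => GC end.

Definition to_letters (w : list gen) : list letter := map (fun g => (gen_st g, false)) w.

Lemma pt_gen_inj x y : pt_gen x = pt_gen y -> x = y.
Proof. destruct x, y; simpl; congruence. Qed.

Lemma gperm_fixed g x : moves g x = false -> gperm g x = x.
Proof. destruct g, x; cbv; congruence. Qed.

Lemma gperm_moved g x : moves g x = true -> gperm g x <> x.
Proof. destruct g, x; cbv; congruence. Qed.

Lemma moves_gperm g x : moves g x = true -> moves g (gperm g x) = true.
Proof. destruct g, x; cbv; congruence. Qed.

Lemma exists_moved g : exists x, moves g x = true.
Proof. destruct g; [exists x1 | exists x2 | exists x1]; reflexivity. Qed.

Lemma exists_common_moved g h : g <> h ->
  exists x, moves g x = true /\ moves h x = true /\ gperm g x <> gperm h x.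
Proof.
  destruct g, h; intros Hgh; try congruence;
    first [ exists x1; repeat split; discriminate
          | exists x2; repeat split; discriminate
          | exists x3; repeat split; discriminate ].
Qed.

Lemma moves_twice_same g1 g2 x y : x <> y ->
  moves g1 x = true -> moves g1 y = true ->
  moves g2 (gperm g1 x) = true -> moves g2 (gperm g1 y) = true -> g1 = g2.
Proof. destruct g1, g2, x, y; cbv; congruence. Qed.

Lemma sect_gen_st g x :
  sect (gen_st g) x = if moves g x then gen_st (pt_gen x) else Se.
Proof. destruct g, x; reflexivity. Qed.

Lemma act_Se u : act Se u = u.
Proof. induction u as [|x u IH]; simpl; [reflexivity|]. destruct x; rewrite IH; reflexivity. Qed.

Lemma act_act_inv s u : act s (act_inv s u) = u.
Proof.
  revert s; induction u as [|y u IH]; intros s; [reflexivity|].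
  destruct s, y; simpl; rewrite IH; reflexivity.
Qed.

Fixpoint word_perm (w : list gen) (x : X) : X :=
  match w with [] => x | g :: w' => word_perm w' (gperm g x) end.

Fixpoint section (w : list gen) (x : X) : list gen :=
  match w with
  | [] => []
  | g :: w' => if moves g x then pt_gen x :: section w' (gperm g x) else section w' x
  end.

Lemma eval_to_letters w x u :
  eval (to_letters w) (x :: u) = word_perm w x :: eval (to_letters (section w x)) u.
Proof.
  revert x u; induction w as [|g w IH]; intros x u; [reflexivity|].
  cbn [eval to_letters map act_letter fst snd act word_perm section].
  rewrite sect_gen_st. fold (gperm g x).
  destruct (moves g x) eqn:Hm; [apply IH|].
  rewrite act_Se, (gperm_fixed _ _ Hm). apply IH.
Qed.

Lemma same_elt_word_perm u v x :
  same_elt (to_letters u) (to_letters v) -> word_perm u x = word_perm v x.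
Proof. intros H. specialize (H [x]). rewrite !eval_to_letters in H. congruence. Qed.

Lemma same_elt_section u v x :
  same_elt (to_letters u) (to_letters v) ->
  same_elt (to_letters (section u x)) (to_letters (section v x)).
Proof. intros H t. specialize (H (x :: t)). rewrite !eval_to_letters in H. congruence. Qed.

Lemma same_elt_cancel g u v :
  same_elt (to_letters (g :: u)) (to_letters (g :: v)) ->
  same_elt (to_letters u) (to_letters v).
Proof.
  intros H t. specialize (H (act_inv (gen_st g) t)).
  cbn [eval to_letters map act_letter fst snd] in H. rewrite act_act_inv in H. exact H.
Qed.

Lemma length_section w x : length (section w x) <= length w.
Proof.
  revert x; induction w as [|g w IH]; intros x; simpl; [lia|].
  destruct (moves g x); simpl; [specialize (IH (gperm g x)) | specialize (IH x)]; lia.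
Qed.

Lemma section_nil_word_perm w x : section w x = [] -> word_perm w x = x.
Proof.
  revert x; induction w as [|g w IH]; intros x H; simpl in *; [reflexivity|].
  destruct (moves g x) eqn:Hm; [discriminate|].
  rewrite (gperm_fixed _ _ Hm). apply IH, H.
Qed.

Lemma section_head w x h t : section w x = h :: t -> h = pt_gen x.
Proof.
  revert x; induction w as [|g w IH]; intros x H; simpl in *; [discriminate|].
  destruct (moves g x); [congruence | exact (IH _ H)].
Qed.

Fixpoint norep (w : list gen) : Prop :=
  match w with
  | g :: ((h :: _) as w') => g <> h /\ norep w'
  | _ => True
  end.

(* Consecutive letters of a section record consecutive, hence distinct,
   positions of the tracked point. *)
Lemma norep_section w x : norep (section w x).
Proof.
  revert x; induction w as [|g w IH]; intros x; simpl; [exact I|].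
  destruct (moves g x) eqn:Hm; [|apply IH].
  specialize (IH (gperm g x)).
  destruct (section w (gperm g x)) as [|h t] eqn:Hs; [exact I|].
  split; [|exact IH].
  rewrite (section_head _ _ _ _ Hs). intros E.
  apply (gperm_moved g x Hm), eq_sym, pt_gen_inj, E.
Qed.

Definition full (w : list gen) (x : X) : Prop := length (section w x) = length w.

Lemma full_cons g w x : full (g :: w) x -> moves g x = true /\ full w (gperm g x).
Proof.
  unfold full; simpl. pose proof (length_section w x) as Hle.
  destruct (moves g x); simpl; intros H; [split; [reflexivity | lia] | lia].
Qed.

Lemma norep_full_two_points w x y :
  norep w -> full w x -> full w y -> x <> y -> length w <= 1.
Proof.
  intros Hn Hx Hy Hxy. destruct w as [|g1 [|g2 w]]; simpl; try lia.
  apply full_cons in Hx as [M1x Hx]; apply full_cons in Hy as [M1y Hy].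
  apply full_cons in Hx as [M2x _]; apply full_cons in Hy as [M2y _].
  destruct Hn as [Hg _]. exfalso.
  exact (Hg (moves_twice_same _ _ _ _ Hxy M1x M1y M2x M2y)).
Qed.

Lemma to_letters_nontrivial w : w <> [] -> ~ same_elt (to_letters w) [].
Proof.
  remember (length w) as n eqn:Hn. revert w Hn.
  induction n as [n IH] using lt_wf_ind; intros v Hn Hv Hid.
  assert (Hshort : forall w, w <> [] -> same_elt (to_letters w) [] -> n <= length w).
  { intros w Hw Hwid. destruct (Nat.lt_ge_cases (length w) n) as [Hlt|]; [|assumption].
    exfalso. exact (IH _ Hlt w eq_refl Hw Hwid). }
  destruct v as [|h v']; [congruence|].
  destruct (exists_moved h) as [x Hx].
  set (w := section (h :: v') x).
  assert (Hw : w <> []) by (unfold w; simpl; rewrite Hx; discriminate).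
  assert (Hwid : same_elt (to_letters w) []) by exact (same_elt_section _ [] x Hid).
  assert (Hwn : length w <= n) by (subst n; apply length_section).
  destruct w as [|k w'] eqn:Ew; [congruence|].
  destruct (exists_moved k) as [p Hp].
  assert (Hfull : forall q, moves k q = true -> full (k :: w') q).
  { intros q Hq. unfold full.
    assert (Hsq : section (k :: w') q <> []) by (simpl; rewrite Hq; discriminate).
    pose proof (Hshort _ Hsq (same_elt_section _ [] q Hwid)).
    pose proof (length_section (k :: w') q). lia. }
  assert (Hlen : length (k :: w') <= 1).
  { rewrite <- Ew. apply (norep_full_two_points _ p (gperm k p)).
    - apply norep_section.
    - rewrite Ew. apply Hfull, Hp.
    - rewrite Ew. apply Hfull, moves_gperm, Hp.
    - intros E. apply (gperm_moved k p Hp). congruence. }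
  destruct w'; simpl in Hlen; [|lia].
  apply (gperm_moved k p Hp). exact (same_elt_word_perm [k] [] p Hwid).
Qed.

Lemma to_letters_inj u v : same_elt (to_letters u) (to_letters v) -> u = v.
Proof.
  remember (length u + length v) as n eqn:Hn. revert u v Hn.
  induction n as [n IH] using lt_wf_ind; intros u v Hn Huv.
  destruct u as [|g u'], v as [|h v'].
  - reflexivity.
  - exfalso. apply (to_letters_nontrivial (h :: v')); [discriminate|].
    intros t. symmetry. apply Huv.
  - exfalso. exact (to_letters_nontrivial (g :: u') ltac:(discriminate) Huv).
  - destruct (gen_eq_dec g h) as [<-|Hgh].
    { f_equal. apply (IH (length u' + length v')); [simpl in Hn; lia | reflexivity |].
      exact (same_elt_cancel _ _ _ Huv). }
    exfalso. destruct (exists_common_moved g h Hgh) as [x [Hgx [Hhx Hne]]].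
    pose proof (same_elt_section _ _ x Huv) as Hsec.
    cbn [section] in Hsec. rewrite Hgx, Hhx in Hsec.
    (* Both sections at x begin with [pt_gen x]; cancelling it shortens them. *)
    apply same_elt_cancel in Hsec.
    assert (Heq : section u' (gperm g x) = section v' (gperm h x)).
    { refine (IH _ _ _ _ eq_refl Hsec).
      pose proof (length_section u' (gperm g x)).
      pose proof (length_section v' (gperm h x)). simpl in Hn. lia. }
    pose proof (same_elt_word_perm _ _ x Huv) as Hperm. cbn [word_perm] in Hperm.
    destruct (section v' (gperm h x)) as [|k t] eqn:Hv.
    + rewrite (section_nil_word_perm _ _ Heq), (section_nil_word_perm _ _ Hv) in Hperm.
      exact (Hne Hperm).
    + apply Hne, pt_gen_inj.
      rewrite <- (section_head _ _ _ _ Heq), <- (section_head _ _ _ _ Hv). reflexivity.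
Qed.

Section Words.

Variable A : Type.
Variable alphabet : list A.

Fixpoint words (n : nat) : list (list A) :=
  match n with
  | 0 => [[]]
  | S n => flat_map (fun a => map (cons a) (words n)) alphabet
  end.

Lemma words_length n : length (words n) = length alphabet ^ n.
Proof.
  induction n as [|n IH]; [reflexivity|]. simpl.
  rewrite (flat_map_constant_length (c := length alphabet ^ n)); [lia|].
  intros a _. rewrite length_map. exact IH.
Qed.

Lemma in_words n w : In w (words n) -> length w = n /\ incl w alphabet.
Proof.
  revert w; induction n as [|n IH]; intros w Hw; simpl in Hw.
  - destruct Hw as [<-|[]]. split; [reflexivity | intros a []].
  - apply in_flat_map in Hw as [a [Ha Hw]]. apply in_map_iff in Hw as [w' [<- Hw']].
    destruct (IH _ Hw') as [Hl Hi]. split; [simpl; congruence|].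
    apply incl_cons; assumption.
Qed.

Lemma NoDup_prepend_each (l : list A) (W : list (list A)) :
  NoDup l -> NoDup W -> NoDup (flat_map (fun a => map (cons a) W) l).
Proof.
  intros Hl HW. induction Hl as [|a l Ha _ IHl]; simpl; [constructor|].
  apply NoDup_app; [|exact IHl|].
  - apply NoDup_map_NoDup_ForallPairs; [|exact HW]. intros w w' _ _. congruence.
  - intros w Hw Hw'. apply in_map_iff in Hw as [w1 [<- _]].
    apply in_flat_map in Hw' as [b [Hb Hw']]. apply in_map_iff in Hw' as [w2 [E _]].
    injection E as -> _. contradiction.
Qed.

Lemma words_NoDup n : NoDup alphabet -> NoDup (words n).
Proof.
  intros Halpha. induction n as [|n IH]; simpl; [repeat constructor; simpl; tauto|].
  exact (NoDup_prepend_each _ _ Halpha IH).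
Qed.

End Words.

Definition all_gens : list gen := [GA; GB; GC].

Lemma ball_card_ge_pow3 n : ball_card_ge n (3 ^ n).
Proof.
  exists (map to_letters (words _ all_gens n)).
  split; [rewrite length_map, words_length; reflexivity|]. split.
  - apply Forall_forall. intros w Hw. apply in_map_iff in Hw as [w' [<- Hw']].
    split.
    + unfold to_letters. rewrite length_map, (proj1 (in_words _ _ _ _ Hw')). lia.
    + apply Forall_forall. intros l Hl. apply in_map_iff in Hl as [g [<- _]].
      unfold is_gen. destruct g; discriminate.
  - assert (Hnd : NoDup (words _ all_gens n)).
    { apply words_NoDup. repeat constructor; simpl; intuition discriminate. }
    induction Hnd as [|w ws Hw _ IH]; simpl; constructor; [|exact IH].
    apply Forall_forall. intros l Hl. apply in_map_iff in Hl as [w' [<- Hw']].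
    intros Hsame. apply Hw. rewrite (to_letters_inj _ _ Hsame). exact Hw'.
Qed.

Theorem corollary5p3 : exponential_growth.
Proof.
  exists 3%R. split; [lra|]. intros n. exists (3 ^ n). split.
  - apply ball_card_ge_pow3.
  - rewrite pow_INR. replace (INR 3) with 3%R by (simpl; lra). lra.
Qed.
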